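(* Let $A>0$, $R_0>0$, and let $f(r,\theta)$ be a function defined for $r\ge R_0$ and $\theta\in[0,A]$. Suppose that $\partial f/\partial\theta$ and $\partial^2 f/\partial\theta^2$ tend to zero uniformly as $r\to\infty$. Then for every sufficiently large $r$, the curve $\theta\in[0,A]\mapsto(r\cos\theta, r\sin\theta,\theta+f(r,\theta))$ has total curvature strictly less than $A$. *)

From Stdlib Require Import Reals.
From Coquelicot Require Import Coquelicot.
Open Scope R_scope.

Definition norm3 (x y z : R) : R := sqrt (x ^ 2 + y ^ 2 + z ^ 2).

Definition speed (c1 c2 c3 : R -> R) (t : R) : R :=
  norm3 (Derive c1 t) (Derive c2 t) (Derive c3 t).

(* curvature kappa = |c' x c''| / |c'|^3 *)
Definition curvature (c1 c2 c3 : R -> R) (t : R) : R :=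
  let x1 := Derive c1 t in let y1 := Derive c2 t in let z1 := Derive c3 t in
  let x2 := Derive_n c1 2 t in let y2 := Derive_n c2 2 t in
  let z2 := Derive_n c3 2 t in
  norm3 (y1 * z2 - z1 * y2) (z1 * x2 - x1 * z2) (x1 * y2 - y1 * x2)
  / (speed c1 c2 c3 t) ^ 3.

Definition total_curvature (c1 c2 c3 : R -> R) (a b : R) : R :=
  RInt (fun t => curvature c1 c2 c3 t * speed c1 c2 c3 t) a b.

(* Write c' = (-r sin, r cos, 1 + g) and c'' = (-r cos, -r sin, h) with g = f_θ, h = f_θθ.
   Then κ |c'| = |c' × c''| / |c'|^2 = sqrt (r^2 h^2 + r^2 (1+g)^2 + r^4) / (r^2 + (1+g)^2),
   and the defect 1 - (κ |c'|)^2 has numerator r^2 ((1+g)^2 - h^2) + (1+g)^4 > 1/4 as soon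
   as |g|, |h| < 1/4, which holds for all large r.  The integrand is then bounded by a
   constant q < 1 depending only on r, and the total curvature is at most q A < A. *)

From Stdlib Require Import Reals Lra Psatz.
From Coquelicot Require Import Coquelicot.
Open Scope R_scope.

Lemma continuous_Rplus_comp (f g : R -> R) x :
  continuous f x -> continuous g x -> continuous (fun t => f t + g t) x.
Proof. exact (continuous_plus (K := R_AbsRing) (V := R_NormedModule) f g x). Qed.

Lemma continuous_Rmult_comp (f g : R -> R) x :
  continuous f x -> continuous g x -> continuous (fun t => f t * g t) x.
Proof. exact (continuous_mult (K := R_AbsRing) f g x). Qed.

Lemma continuous_pow_comp (f : R -> R) n x :
  continuous f x -> continuous (fun t => f t ^ n) x.
Proof.
intro Hf; induction n as [|n IH]; simpl.
- apply continuous_const.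
- now apply continuous_Rmult_comp.
Qed.

Lemma curvature_speed_eq (c1 c2 c3 : R -> R) t :
  let x1 := Derive c1 t in let y1 := Derive c2 t in let z1 := Derive c3 t in
  let x2 := Derive_n c1 2 t in let y2 := Derive_n c2 2 t in
  let z2 := Derive_n c3 2 t in
  curvature c1 c2 c3 t * speed c1 c2 c3 t
  = norm3 (y1 * z2 - z1 * y2) (z1 * x2 - x1 * z2) (x1 * y2 - y1 * x2)
    / (x1 ^ 2 + y1 ^ 2 + z1 ^ 2).
Proof.
cbv zeta; unfold curvature, speed; cbv zeta.
set (v := norm3 _ _ _) at 2 3.
assert (Hv2 : v ^ 2 = Derive c1 t ^ 2 + Derive c2 t ^ 2 + Derive c3 t ^ 2).
{ unfold v, norm3; rewrite pow2_sqrt; [reflexivity | nra]. }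
rewrite <- Hv2.
(* both sides vanish when v = 0, since x / 0 = 0 *)
destruct (Req_dec v 0) as [-> | Hv].
- unfold Rdiv; rewrite !pow_i, Rinv_0 by lia; ring.
- field; exact Hv.
Qed.

Lemma Derive_scal_cos r t : Derive (fun th => r * cos th) t = - r * sin t.
Proof. apply is_derive_unique; auto_derive; [easy | ring]. Qed.

Lemma Derive_scal_sin r t : Derive (fun th => r * sin th) t = r * cos t.
Proof. apply is_derive_unique; auto_derive; [easy | ring]. Qed.

Lemma Derive_n2_scal_cos r t : Derive_n (fun th => r * cos th) 2 t = - r * cos t.
Proof.
change (Derive (Derive (fun th => r * cos th)) t = - r * cos t).
rewrite (Derive_ext _ (fun u => - r * sin u)) by apply Derive_scal_cos.
apply is_derive_unique; auto_derive; [easy | ring].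
Qed.

Lemma Derive_n2_scal_sin r t : Derive_n (fun th => r * sin th) 2 t = - r * sin t.
Proof.
change (Derive (Derive (fun th => r * sin th)) t = - r * sin t).
rewrite (Derive_ext _ (fun u => r * cos u)) by apply Derive_scal_sin.
apply is_derive_unique; auto_derive; [easy | ring].
Qed.

Lemma Derive_id_plus (g : R -> R) t :
  ex_derive g t -> Derive (fun th => th + g th) t = 1 + Derive g t.
Proof.
intro Hg; rewrite (Derive_plus (fun th => th) g t (ex_derive_id t) Hg).
now rewrite Derive_id.
Qed.

Lemma Derive_n2_id_plus (g : R -> R) t :
  locally t (ex_derive g) -> ex_derive (Derive g) t ->
  Derive_n (fun th => th + g th) 2 t = Derive_n g 2 t.
Proof.
intros Hg Hg'.
change (Derive (Derive (fun th => th + g th)) t = Derive (Derive g) t).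
rewrite (Derive_ext_loc _ (fun u => 1 + Derive g u)).
- rewrite Derive_plus, Derive_const; [ring | apply ex_derive_const | exact Hg'].
- exact (filter_imp _ _ (Derive_id_plus g) Hg).
Qed.

Definition helix_integrand (r g h : R) : R :=
  sqrt (r ^ 2 * h ^ 2 + r ^ 2 * (1 + g) ^ 2 + r ^ 4) / (r ^ 2 + (1 + g) ^ 2).

Lemma helix_curvature_speed (r : R) (g : R -> R) t :
  locally t (ex_derive g) -> ex_derive (Derive g) t ->
  curvature (fun th => r * cos th) (fun th => r * sin th) (fun th => th + g th) t
  * speed (fun th => r * cos th) (fun th => r * sin th) (fun th => th + g th) t
  = helix_integrand r (Derive g t) (Derive_n g 2 t).
Proof.
intros Hg Hg'.
rewrite curvature_speed_eq; cbv zeta.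
rewrite Derive_scal_cos, Derive_scal_sin, Derive_n2_scal_cos, Derive_n2_scal_sin,
  Derive_id_plus, Derive_n2_id_plus by (exact Hg' || exact Hg || exact (locally_singleton _ _ Hg)).
unfold helix_integrand, norm3.
pose proof (sin2_cos2 t) as Hsc; unfold Rsqr in Hsc.
set (G := Derive g t); set (H := Derive_n g 2 t).
f_equal; [f_equal |].
- transitivity ((r^2*H^2 + r^2*(1+G)^2) * (sin t ^ 2 + cos t ^ 2)
                + r^4 * (sin t ^ 2 + cos t ^ 2) ^ 2); [ring |].
  replace (sin t ^ 2 + cos t ^ 2) with 1 by lra; ring.
- transitivity (r^2 * (sin t ^ 2 + cos t ^ 2) + (1+G)^2); [ring |].
  replace (sin t ^ 2 + cos t ^ 2) with 1 by lra; ring.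
Qed.

Lemma helix_integrand_continuous r (G H : R -> R) t :
  r <> 0 -> continuous G t -> continuous H t ->
  continuous (fun u => helix_integrand r (G u) (H u)) t.
Proof.
intros Hr HG HH; unfold helix_integrand.
assert (HG2 : continuous (fun u => (1 + G u) ^ 2) t).
{ apply continuous_pow_comp, continuous_Rplus_comp; [apply continuous_const | exact HG]. }
assert (HH2 : continuous (fun u => H u ^ 2) t) by now apply continuous_pow_comp.
apply continuous_Rmult_comp; [apply continuous_sqrt_comp | apply continuous_Rinv_comp].
- apply continuous_Rplus_comp; [apply continuous_Rplus_comp | apply continuous_const];
    (apply continuous_Rmult_comp; [apply continuous_const | assumption]).
- apply continuous_Rplus_comp; [apply continuous_const | exact HG2].
- assert (0 < r ^ 2) by (pose proof (Rsqr_pos_lt r Hr); unfold Rsqr in *; lra).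
  assert (0 <= (1 + G t) ^ 2) by apply pow2_ge_0.
  lra.
Qed.

Lemma helix_integrand_le r g h :
  Rabs g < 1 / 4 -> Rabs h < 1 / 4 ->
  helix_integrand r g h <= sqrt (1 - / (4 * (r ^ 2 + 2) ^ 2)).
Proof.
intros Hg Hh; apply Rabs_def2 in Hg; apply Rabs_def2 in Hh.
unfold helix_integrand.
set (u := (1 + g) ^ 2); set (D := r ^ 2 + u); set (P := r ^ 2 + 2).
assert (Hr2 : 0 <= r ^ 2) by apply pow2_ge_0.
assert (Hu : 9 / 16 <= u <= 25 / 16) by (unfold u; split; nra).
assert (HD : 0 < D <= P) by (unfold D, P; lra).
assert (HP : 0 < P ^ 2) by (apply pow_lt; lra).
rewrite <- (sqrt_pow2 D) by lra.
rewrite <- sqrt_div_alt by (apply pow_lt; lra).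
apply sqrt_le_1_alt.
apply Rle_div_l; [apply pow_lt; lra |].
assert (Hdefect : D ^ 2 - (r ^ 2 * h ^ 2 + r ^ 2 * u + r ^ 4) >= 1 / 4).
{ assert (h ^ 2 <= 1 / 16) by nra.
  assert (0 <= r ^ 2 * (u - h ^ 2)) by (apply Rmult_le_pos; lra).
  assert (1 / 4 <= u ^ 2) by nra.
  replace (D ^ 2 - (r ^ 2 * h ^ 2 + r ^ 2 * u + r ^ 4)) with (r ^ 2 * (u - h ^ 2) + u ^ 2)
    by (unfold D; ring).
  lra. }
assert (Hsmall : / (4 * P ^ 2) * D ^ 2 <= 1 / 4).
{ apply (Rmult_le_reg_l (4 * P ^ 2)); [lra |].
  rewrite <- Rmult_assoc, Rinv_r by lra.
  assert (D ^ 2 <= P ^ 2) by (apply pow_incr; lra).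
  lra. }
lra.
Qed.

Lemma sqrt_one_minus_inv_lt_1 x : 1 < x -> sqrt (1 - / x) < 1.
Proof.
intro Hx.
assert (0 < / x) by (apply Rinv_0_lt_compat; lra).
assert (/ x < 1) by (rewrite <- Rinv_1; apply Rinv_lt_contravar; lra).
rewrite <- sqrt_1 at 2; apply sqrt_lt_1_alt; lra.
Qed.

Lemma locally_open_interval (P : R -> Prop) a b t :
  a < t < b -> (forall u, a < u < b -> P u) -> locally t P.
Proof.
intros Ht HP.
apply (filter_imp (fun u => a < u /\ u < b)); [exact HP |].
apply filter_and; [apply (open_gt a t) | apply (open_lt b t)]; lra.
Qed.

Lemma helix_total_curvature_le (r A q : R) (g : R -> R) :
  0 <= A -> r <> 0 ->
  (forall t, 0 <= t <= A ->
     ex_derive g t /\ ex_derive (Derive g) t /\ continuous (Derive_n g 2) t) ->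
  (forall t, 0 <= t <= A -> helix_integrand r (Derive g t) (Derive_n g 2 t) <= q) ->
  total_curvature (fun th => r * cos th) (fun th => r * sin th)
                  (fun th => th + g th) 0 A <= q * A.
Proof.
intros HA Hr Hreg Hq.
set (F := fun t => helix_integrand r (Derive g t) (Derive_n g 2 t)).
assert (HexF : ex_RInt F 0 A).
{ apply (@ex_RInt_continuous R_CompleteNormedModule); intros t Ht.
  rewrite Rmin_left, Rmax_right in Ht by lra.
  destruct (Hreg t Ht) as [_ [Hg' Hg'']].
  exact (helix_integrand_continuous r _ _ t Hr (ex_derive_continuous _ _ Hg') Hg''). }
unfold total_curvature; rewrite (RInt_ext _ F).
- apply Rle_trans with (RInt (fun _ => q) 0 A).
  + apply RInt_le; [lra | exact HexF | apply ex_RInt_const | intros t Ht; apply Hq; lra].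
  + rewrite RInt_const; unfold scal; simpl; unfold mult; simpl; lra.
- intros t Ht; rewrite Rmin_left, Rmax_right in Ht by lra.
  apply helix_curvature_speed.
  + apply (locally_open_interval _ 0 A); [exact Ht |].
    intros u Hu; apply Hreg; lra.
  + apply Hreg; lra.
Qed.

Theorem lemma3p2 (A R0 : R) (f : R -> R -> R) :
  0 < A -> 0 < R0 ->
  (forall r, R0 <= r -> forall th, 0 <= th <= A ->
     ex_derive (f r) th /\ ex_derive (Derive (f r)) th /\
     continuous (Derive_n (f r) 2) th) ->
  (forall eps, 0 < eps -> exists R1, forall r, R0 <= r -> R1 <= r ->
     forall th, 0 <= th <= A ->
       Rabs (Derive (f r) th) < eps /\ Rabs (Derive_n (f r) 2 th) < eps) ->
  exists R1, forall r, R0 <= r -> R1 <= r ->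
    total_curvature (fun th => r * cos th) (fun th => r * sin th)
                    (fun th => th + f r th) 0 A < A.
Proof.
intros HA HR0 Hreg Hunif.
destruct (Hunif (1 / 4)) as [R1 HR1]; [lra |].
exists R1; intros r Hr0 Hr1.
set (q := sqrt (1 - / (4 * (r ^ 2 + 2) ^ 2))).
assert (Hq : q < 1).
{ apply sqrt_one_minus_inv_lt_1.
  assert (0 <= r ^ 2) by apply pow2_ge_0.
  assert (2 * 2 <= (r ^ 2 + 2) ^ 2) by (simpl; nra).
  lra. }
apply Rle_lt_trans with (q * A); [| nra].
apply helix_total_curvature_le; [lra | lra | exact (Hreg r Hr0) |].
intros t Ht; destruct (HR1 r Hr0 Hr1 t Ht).
now apply helix_integrand_le.
Qed.
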